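(* There is an absolute constant $C>0$ such that the following holds. Let $m,q\ge1$ and let $\mu_1,\dots,\mu_m$ be random elements of $\Delta_q$ such that for each $x\in[q]$ the sequence $(\mu_i(x))_{i\in[m]}$ is a martingale. Then for every integer $n$ with $nq\ge2$, $$\sum_{x\in[q]}\mathbb E\Big[\max_{i\in[m]}\mu_i(x)-\min_{i\in[m]}\mu_i(x)\Big]\le\min\Big\{C\log(nq)\,\mathbb E[\mathrm{TV}(\mu_1,\mu_m)]+\tfrac1n,\ \ C\sqrt q\,\Big(\mathbb E\Big[\sum_{x\in[q]}(\mu_m(x)-\mu_1(x))^2\Big]\Big)^{1/2}\Big\}.$$
   Context: $\Delta_q$ is the probability simplex on $[q]$, $\mathrm{TV}$ the total variation distance, $\log$ the natural logarithm. *)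

From HB Require Import structures.
From mathcomp Require Import all_boot all_order all_algebra.
From mathcomp Require Import all_classical all_reals all_analysis.
From mathcomp Require Import Rstruct Rstruct_topology.
Set Implicit Arguments. Unset Strict Implicit. Unset Printing Implicit Defensive.
Import Order.TTheory GRing.Theory Num.Theory.
Import numFieldNormedType.Exports.
Local Open Scope classical_set_scope.
Local Open Scope ring_scope.

Notation RR := Rdefinitions.R.

Definition in_simplex (q : nat) (p : 'I_q -> RR) : Prop :=
  (forall x, 0 <= p x) /\ \sum_(x < q) p x = 1.

Definition TV (q : nat) (p p' : 'I_q -> RR) : RR :=
  2^-1 * \sum_(x < q) `|p x - p' x|.

Definition Expect d (T : measurableType d) (P : probability T RR) (f : T -> RR) : RR :=
  \int[P]_(w in setT) f w.

Definition filtration d (T : measurableType d) (F : nat -> set (set T)) : Prop :=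
  (forall i, @sigma_algebra T setT (F i)) /\
  (forall i, F i `<=` measurable) /\
  (forall i, F i `<=` F i.+1).

(* X (indexed by i < m) is a martingale w.r.t. F under P: X i is F i-measurable
   and integrable, and E[X (i+1) 1_A] = E[X i 1_A] for all A in F i
   (i.e. E[X (i+1) | F i] = X i). *)
Definition martingale d (T : measurableType d) (P : probability T RR)
  (F : nat -> set (set T)) (m : nat) (X : nat -> T -> RR) : Prop :=
  (forall i, (i < m)%N ->
     (forall B : set RR, measurable (B : set (measurableTypeR RR)) -> F i (X i @^-1` B)) /\
     P.-integrable setT (fun w => (X i w)%:E)) /\
  (forall i, (i.+1 < m)%N -> forall A, F i A ->
     \int[P]_(w in A) X i.+1 w = \int[P]_(w in A) X i w).

From HB Require Import structures.
From mathcomp Require Import all_boot all_order all_algebra.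
From mathcomp Require Import all_classical all_reals all_analysis.
From mathcomp Require Import Rstruct Rstruct_topology.
From mathcomp Require Import ring lra measurable_realfun.
Import Order.TTheory GRing.Theory Num.Theory.
Import numFieldNormedType.Exports.
Local Open Scope classical_set_scope.
Local Open Scope ring_scope.
Set Implicit Arguments. Unset Strict Implicit. Unset Printing Implicit Defensive.

(* Fix a coordinate x and write X_i = mu_i(x), a [0,1]-valued martingale, and
   D = X_m - X_1.  Stopping X at the first time X_i - X_1 >= lam gives the
   maximal inequality  lam P(max_i X_i - X_1 >= lam) <= E[D; max_i X_i - X_1 >= lam].
   Summing it over the dyadic levels lam = 2^k l0 (a discrete layer-cake formula)
   bounds E[max_i X_i - X_1] by l0 + K E[D^+] when 2^K l0 > 1, and, after
   AM-GM, by l0 + 2 E[D^2] / l0.  The range max - min of X is the sum of the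
   upper deviations of X and of 1 - X, another such martingale.  Summing over x
   with l0 = 1/(2nq), K ~ log2(nq) gives the first bound; optimizing l0 in
   2 q l0 + 4 E[|mu_m - mu_1|^2] / l0 gives the second. *)

Section expectation.
Context {d : measure_display} {T : measurableType d} {R : realType} {P : probability T R}.
Local Notation E := (Rintegral P setT).

Definition bounded_measurable (f : T -> R) :=
  measurable_fun setT f /\ exists M : R, forall w, `|f w| <= M.

Lemma bounded_measurable_integrable f :
  bounded_measurable f -> P.-integrable setT (EFin \o f).
Proof.
move=> [mf [M fM]]; apply: measurable_bounded_integrable => //.
  by apply: le_lt_trans (probability_le1 _ _) (ltry _).
exists M; split; first exact: num_real.
by move=> x Mx w _; apply: le_trans (fM w) (ltW Mx).
Qed.

Lemma bounded_measurable_cst c : bounded_measurable (fun _ => c).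
Proof. by split; [exact: measurable_cst | exists `|c|]. Qed.

Lemma bounded_measurableD f g : bounded_measurable f -> bounded_measurable g ->
  bounded_measurable (fun w => f w + g w).
Proof.
move=> [mf [M fM]] [mg [N gN]]; split; first exact: measurable_funD.
by exists (M + N) => w; apply: le_trans (ler_normD _ _) (lerD _ _).
Qed.

Lemma bounded_measurableB f g : bounded_measurable f -> bounded_measurable g ->
  bounded_measurable (fun w => f w - g w).
Proof.
move=> [mf [M fM]] [mg [N gN]]; split; first exact: measurable_funB.
by exists (M + N) => w; apply: le_trans (ler_normB _ _) (lerD _ _).
Qed.

Lemma bounded_measurableM f g : bounded_measurable f -> bounded_measurable g ->
  bounded_measurable (fun w => f w * g w).
Proof.
move=> [mf [M fM]] [mg [N gN]]; split; first exact: measurable_funM.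
by exists (M * N) => w; rewrite normrM ler_pM.
Qed.

Lemma bounded_measurableZl c f : bounded_measurable f ->
  bounded_measurable (fun w => c * f w).
Proof. exact: bounded_measurableM (bounded_measurable_cst c). Qed.

Lemma bounded_measurable_norm f : bounded_measurable f ->
  bounded_measurable (fun w => `|f w|).
Proof.
move=> [mf [M fM]]; split; last by exists M => w; rewrite normr_id.
exact: measurableT_comp mf.
Qed.

Lemma bounded_measurable_max0 f : bounded_measurable f ->
  bounded_measurable (fun w => Order.max (f w) 0).
Proof.
move=> [mf [M fM]]; split; first exact: measurable_maxr.
exists M => w; case: (leP (f w) 0) => _; last exact: fM.
by rewrite normr0 (le_trans _ (fM w)).
Qed.

Lemma bounded_measurable_sum n (f : 'I_n -> T -> R) :
  (forall i, bounded_measurable (f i)) ->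
  bounded_measurable (fun w => \sum_(i < n) f i w).
Proof.
elim: n f => [|n IH] f fb.
  by under eq_fun do rewrite big_ord0; exact: bounded_measurable_cst.
under eq_fun do rewrite big_ord_recr /=.
by apply: bounded_measurableD => //; apply: IH.
Qed.

Lemma Expect_cst c : E (fun _ => c) = c.
Proof. by rewrite Rintegral_cst // (congr1 fine (probability_setT P)) mulr1. Qed.

Lemma ExpectD f g : bounded_measurable f -> bounded_measurable g ->
  E (fun w => f w + g w) = E f + E g.
Proof.
by move=> /bounded_measurable_integrable fi /bounded_measurable_integrable gi; exact: RintegralD.
Qed.

Lemma ExpectB f g : bounded_measurable f -> bounded_measurable g ->
  E (fun w => f w - g w) = E f - E g.
Proof.
by move=> /bounded_measurable_integrable fi /bounded_measurable_integrable gi; exact: RintegralB.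
Qed.

Lemma ExpectZl c f : bounded_measurable f -> E (fun w => c * f w) = c * E f.
Proof. by move=> /bounded_measurable_integrable fi; exact: RintegralZl. Qed.

Lemma Expect_sum n (f : 'I_n -> T -> R) : (forall i, bounded_measurable (f i)) ->
  E (fun w => \sum_(i < n) f i w) = \sum_(i < n) E (f i).
Proof.
elim: n f => [|n IH] f fb.
  by under eq_fun do rewrite big_ord0; rewrite big_ord0 Expect_cst.
under eq_fun do rewrite big_ord_recr /=.
rewrite big_ord_recr ExpectD ?IH //; exact: bounded_measurable_sum.
Qed.

Lemma le_Expect f g : bounded_measurable f -> bounded_measurable g ->
  (forall w, f w <= g w) -> E f <= E g.
Proof.
move=> /bounded_measurable_integrable fi /bounded_measurable_integrable gi fg.
exact: le_Rintegral.
Qed.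

Lemma Expect_ge0 f : (forall w, 0 <= f w) -> 0 <= E f.
Proof. by move=> f0; apply: Rintegral_ge0. Qed.

End expectation.

Section measurable_wrt.
Context d (T : measurableType d) (R : realType).

Definition measurable_wrt (G : set (set T)) (f : T -> R) :=
  @measurable_fun _ _ (g_sigma_algebraType G) R setT f.

Lemma measurable_wrtP G f : sigma_algebra setT G ->
  measurable_wrt G f <-> forall B : set R, measurable B -> G (f @^-1` B).
Proof.
move=> sG; split => [mf B mB|fG _ B mB].
  by have := mf measurableT B mB; rewrite setTI /measurable /= (sigma_algebra_id sG).
by rewrite setTI; apply: sub_sigma_algebra; exact: fG.
Qed.

Lemma measurable_wrt_sub G1 G2 f : sigma_algebra setT G1 -> G1 `<=` G2 ->
  measurable_wrt G1 f -> measurable_wrt G2 f.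
Proof.
move=> sG1 G12 /(measurable_wrtP _ sG1) fG1 _ B mB.
by rewrite setTI; apply: sub_sigma_algebra; exact/G12/fG1.
Qed.

Lemma measurable_wrt_measurable G f : sigma_algebra setT G -> G `<=` measurable ->
  measurable_wrt G f -> measurable_fun setT f.
Proof. by move=> sG Gm /(measurable_wrtP _ sG) fG _ B mB; rewrite setTI; exact/Gm/fG. Qed.

Lemma measurable_fun_ge (g : T -> R) (c : R) : measurable_fun setT g ->
  measurable_fun setT (fun w => (nat_of_bool (c <= g w))%:R : R).
Proof.
move=> mg.
have -> : (fun w => (nat_of_bool (c <= g w))%:R : R) = \1_(g @^-1` `[c, +oo[%classic).
  apply/funext => w; rewrite indicE preimage_itvcy /=.
  by congr ((nat_of_bool _)%:R); apply/idP/idP => [cg|/set_mem //]; exact: mem_set.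
apply: measurable_indic.
by have := mg measurableT _ (measurable_itv `[c, +oo[); rewrite setTI.
Qed.

Lemma measurable_fun_bigmax n (g : 'I_n -> T -> R) : (forall i, measurable_fun setT (g i)) ->
  measurable_fun setT (fun w => \big[Order.max/0]_(i < n) g i w).
Proof.
elim: n g => [|n IH] g mg; first by under eq_fun do rewrite big_ord0; exact: measurable_cst.
under eq_fun do rewrite big_ord_recl /=.
by apply: measurable_maxr => //; apply: IH.
Qed.

End measurable_wrt.

Section boolean_valued.
Context (T : Type) (R : numDomainType).

Definition boolean_valued (f : T -> R) := forall w, f w = 0 \/ f w = 1.

Lemma boolean_valued_01 f w : boolean_valued f -> 0 <= f w <= 1.
Proof. by move=> fb; case: (fb w) => ->; rewrite lexx ler01. Qed.

Lemma boolean_valued_ge (g : T -> R) c : boolean_valued (fun w => (nat_of_bool (c <= g w))%:R).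
Proof. by move=> w; case: (c <= g w); [right|left]. Qed.

Lemma boolean_valued_1B f : boolean_valued f -> boolean_valued (fun w => 1 - f w).
Proof. by move=> fb w; case: (fb w) => ->; [right; rewrite subr0 | left; rewrite subrr]. Qed.

Lemma boolean_valuedM f g : boolean_valued f -> boolean_valued g ->
  boolean_valued (fun w => f w * g w).
Proof.
by move=> fb gb w; case: (fb w) => ->; [left; rewrite mul0r | rewrite mul1r; exact: gb].
Qed.

Lemma boolean_valued_prod n (f : 'I_n -> T -> R) : (forall i, boolean_valued (f i)) ->
  boolean_valued (fun w => \prod_(i < n) f i w).
Proof.
elim: n f => [|n IH] f fb; first by move=> w; rewrite big_ord0; right.
by under eq_fun do rewrite big_ord_recr; apply: boolean_valuedM => //; apply: IH.
Qed.

End boolean_valued.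

Lemma boolean_valued_bounded d (T : measurableType d) (R : realType) (f : T -> R) :
  measurable_fun setT f -> boolean_valued f -> bounded_measurable f.
Proof.
move=> mf fb; split => //; exists 1 => w.
by have /andP[f0 f1] := boolean_valued_01 w fb; rewrite ger0_norm.
Qed.

Lemma sum_first_success (R : comNzRingType) (a : nat -> R) n :
  \sum_(i < n) a i * \prod_(j < i) (1 - a j) = 1 - \prod_(j < n) (1 - a j).
Proof.
elim: n => [|n IH]; first by rewrite !big_ord0 subrr.
by rewrite big_ord_recr /= IH [in RHS]big_ord_recr /=; ring.
Qed.

Section real_domain.
Context (R : realDomainType).

Lemma bigmax_1B n (f : nat -> R) :
  \big[Order.max/0]_(i < n) (1 - f i) = 1 - \big[Order.min/1]_(i < n) f i.
Proof.
elim: n f => [|n IH] f; first by rewrite !big_ord0 subrr.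
rewrite !big_ord_recl (IH (fun i => f i.+1)).
case: (leP (\big[Order.min/1]_(i < n) f i.+1) (f 0%N)) => h.
  by rewrite max_r // lerD2l lerN2.
by rewrite max_l // lerD2l lerN2 ltW.
Qed.

Lemma bigmax_ge_exists n (f : 'I_n -> R) c : 0 < c ->
  c <= \big[Order.max/0]_(i < n) f i -> exists i, c <= f i.
Proof.
move=> c_gt0; apply: contraPP => /forallNP fc; apply/negP; rewrite -ltNge.
by apply/bigmax_ltP; split => // i _; rewrite ltNge; apply/negP/fc.
Qed.

End real_domain.

Section dyadic.
Context (R : realFieldType).

Lemma sum_pow2 K : 1 + \sum_(k < K) 2 ^+ k = 2 ^+ K :> R.
Proof. by elim: K => [|K IH]; rewrite ?big_ord0 ?addr0 // big_ord_recr addrA IH exprS; ring. Qed.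

Lemma sum_inv_pow2_le2 K : \sum_(k < K) (2 ^+ k)^-1 <= 2 :> R.
Proof.
suff -> : \sum_(k < K) (2 ^+ k)^-1 = 2 - 2 / 2 ^+ K :> R.
  by rewrite lerBlDr lerDl divr_ge0 ?exprn_ge0.
elim: K => [|K IH]; first by rewrite big_ord0 expr0 divr1 subrr.
have pow2_neq0 : 2 ^+ K != 0 :> R by rewrite expf_neq0 ?pnatr_eq0.
by rewrite big_ord_recr /= IH exprS; field.
Qed.

(* Layer-cake bound along the levels l0, 2 l0, ..., 2^(K-1) l0. *)
Lemma le_dyadic_levels (v l0 : R) (u : R -> R) K : 0 < l0 -> v < 2 ^+ K * l0 ->
  (forall l, 0 <= u l) -> (forall l, 0 < l -> l <= v -> u l = 1) ->
  v <= l0 + \sum_(k < K) (2 ^+ k * l0) * u (2 ^+ k * l0).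
Proof.
move=> l0_gt0 + u_ge0 u_eq1; elim: K => [|K IH] v_lt.
  by rewrite big_ord0 addr0 ltW // -(mul1r l0).
have lvl_gt0 k : 0 < 2 ^+ k * l0 :> R by rewrite mulr_gt0 ?exprn_gt0.
case: (ltP v (2 ^+ K * l0)) => [v_ltK|v_geK].
  rewrite big_ord_recr addrA (le_trans (IH v_ltK)) // lerDl.
  by rewrite mulr_ge0 // ltW.
rewrite (eq_bigr (fun k : 'I_K.+1 => 2 ^+ k * l0)) => [|k _]; last first.
  rewrite u_eq1 ?mulr1 //; apply: le_trans v_geK.
  by rewrite ler_pM2r // ler_eXn2l ?ltr1n // -ltnS.
by rewrite -mulr_suml -[X in X + _]mul1r -mulrDl sum_pow2 ltW.
Qed.

End dyadic.

Lemma exists_pow2_gt (R : archiRealFieldType) (l0 : R) : 0 < l0 -> exists K, 1 < 2 ^+ K * l0.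
Proof.
move=> l0_gt0; exists (Num.Def.archi_bound l0^-1).
by rewrite -ltr_pdivrMr // div1r; exact: upper_nthrootP.
Qed.


Lemma filtration_le d (T : measurableType d) (F : nat -> set (set T)) i j :
  filtration F -> (i <= j)%N -> F i `<=` F j.
Proof.
move=> [_ [_ F_incr]] /subnK <-; elim: (j - i)%N => [|k IH] //.
by rewrite addSn => A /IH /F_incr.
Qed.

Definition martingale_on_indicators d (T : measurableType d) (R : realType)
    (P : probability T R) (F : nat -> set (set T)) (m : nat) (X : nat -> T -> R) :=
  forall i j h, (i <= j)%N -> (j < m)%N -> boolean_valued h -> measurable_wrt (F i) h ->
  Rintegral P setT (fun w => X j w * h w) = Rintegral P setT (fun w => X i w * h w).

Section upper_deviation.
Context d (T : measurableType d) (R : realType) (P : probability T R).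
Local Notation E := (Rintegral P setT).
Variables (F : nat -> set (set T)) (m : nat) (X : nat -> T -> R).
Hypotheses (F_filtration : filtration F) (m_gt0 : (0 < m)%N).
Hypothesis X_adapted : forall i, (i < m)%N -> measurable_wrt (F i) (X i).
Hypothesis X_01 : forall i w, (i < m)%N -> 0 <= X i w <= 1.
Hypothesis X_martingale : martingale_on_indicators P F m X.

Let F_sigma i : sigma_algebra setT (F i) := F_filtration.1 i.
Let F_measurable i : F i `<=` measurable := F_filtration.2.1 i.

Lemma adapted_le i j : (i <= j)%N -> (i < m)%N -> measurable_wrt (F j) (X i).
Proof.
move=> ij im.
exact: measurable_wrt_sub (F_sigma i) (filtration_le F_filtration ij) (X_adapted im).
Qed.

Lemma adapted_bounded i : (i < m)%N -> bounded_measurable (X i).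
Proof.
move=> im; split.
  exact: measurable_wrt_measurable (F_sigma i) (@F_measurable i) (X_adapted im).
by exists 1 => w; have /andP[X0 X1] := X_01 w im; rewrite ger0_norm.
Qed.

Definition exceeds lam i w : R := (nat_of_bool (lam <= X i w - X 0%N w))%:R.
Definition first_exceeds lam i w :=
  exceeds lam i w * \prod_(j < i) (1 - exceeds lam j w).
Definition ever_exceeds lam w := 1 - \prod_(j < m) (1 - exceeds lam j w).
Definition increment w := X m.-1 w - X 0%N w.
Definition upper_deviation w := \big[Order.max/0]_(i < m) X i w - X 0%N w.

Lemma exceeds_measurable lam i j : (j <= i)%N -> (j < m)%N ->
  measurable_wrt (F i) (exceeds lam j).
Proof.
move=> ji jm; apply: measurable_fun_ge; apply: measurable_funB; first exact: adapted_le.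
exact: adapted_le (leq0n _) m_gt0.
Qed.

Lemma first_exceeds_measurable lam i : (i < m)%N ->
  measurable_wrt (F i) (first_exceeds lam i).
Proof.
move=> im; apply: measurable_funM; first exact: exceeds_measurable.
apply: measurable_prod => j _; apply: measurable_funB; first exact: measurable_cst.
by apply: exceeds_measurable; [exact: ltnW | exact: ltn_trans im].
Qed.

Lemma first_exceeds_boolean lam i : boolean_valued (first_exceeds lam i).
Proof.
apply: boolean_valuedM; first exact: boolean_valued_ge.
by apply: boolean_valued_prod => j; apply/boolean_valued_1B/boolean_valued_ge.
Qed.

Lemma ever_exceeds_boolean lam : boolean_valued (ever_exceeds lam).
Proof.
apply/boolean_valued_1B/boolean_valued_prod => j.
exact/boolean_valued_1B/boolean_valued_ge.
Qed.

Lemma first_exceeds_bounded lam i : (i < m)%N -> bounded_measurable (first_exceeds lam i).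
Proof.
move=> im; apply: boolean_valued_bounded (first_exceeds_boolean _ _).
exact: measurable_wrt_measurable (F_sigma i) (@F_measurable i)
  (first_exceeds_measurable _ im).
Qed.

Lemma ever_exceeds_sum lam w :
  ever_exceeds lam w = \sum_(i < m) first_exceeds lam i w.
Proof. by rewrite /ever_exceeds -(sum_first_success (fun j => exceeds lam j w)). Qed.

Lemma ever_exceeds_bounded lam : bounded_measurable (ever_exceeds lam).
Proof.
apply: boolean_valued_bounded (ever_exceeds_boolean _).
rewrite (funext (ever_exceeds_sum lam)); apply: measurable_sum => i.
exact: (first_exceeds_bounded _ (ltn_ord i)).1.
Qed.

Lemma increment_bounded : bounded_measurable increment.
Proof. by apply: bounded_measurableB; apply: adapted_bounded; rewrite // prednK. Qed.

Lemma first_exceeds_le lam i w :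
  lam * first_exceeds lam i w <= (X i w - X 0%N w) * first_exceeds lam i w.
Proof.
have prod_ge0 : 0 <= \prod_(j < i) (1 - exceeds lam j w).
  by apply: prodr_ge0 => j _; rewrite subr_ge0 /exceeds; case: (lam <= _); rewrite ?ler01.
rewrite /first_exceeds /exceeds.
have [lam_le|_] := boolP (lam <= X i w - X 0%N w); last by rewrite !mul0r !mulr0.
by rewrite !mul1r ler_wpM2r.
Qed.

Lemma optional_stopping lam i : (i < m)%N ->
  E (fun w => increment w * first_exceeds lam i w) =
  E (fun w => (X i w - X 0%N w) * first_exceeds lam i w).
Proof.
move=> im; have Xhb k : (k < m)%N ->
    bounded_measurable (fun w => X k w * first_exceeds lam i w).
  move=> km; apply: bounded_measurableM (first_exceeds_bounded _ im).
  exact: adapted_bounded.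
have mm : (m.-1 < m)%N by rewrite prednK.
under eq_Rintegral do rewrite mulrBl.
under [RHS]eq_Rintegral do rewrite mulrBl.
rewrite !ExpectB; try by apply: Xhb.
congr (_ - _); apply: X_martingale => //.
- by rewrite -ltnS prednK.
- exact: first_exceeds_boolean.
- exact: first_exceeds_measurable.
Qed.

Lemma maximal_inequality lam :
  lam * E (ever_exceeds lam) <= E (fun w => increment w * ever_exceeds lam w).
Proof.
rewrite (funext (ever_exceeds_sum lam)) /=.
under [X in _ <= X]eq_Rintegral do rewrite mulr_sumr.
have hb (i : 'I_m) : bounded_measurable (first_exceeds lam i).
  exact: first_exceeds_bounded (ltn_ord i).
have Dhb (i : 'I_m) : bounded_measurable (fun w => increment w * first_exceeds lam i w).
  exact: bounded_measurableM increment_bounded (hb i).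
rewrite !Expect_sum // mulr_sumr; apply: ler_sum => i _.
rewrite optional_stopping // -ExpectZl //.
apply: le_Expect => [||w]; last exact: first_exceeds_le.
- exact: bounded_measurableZl.
- by apply: bounded_measurableM _ (hb i); apply: bounded_measurableB; exact: adapted_bounded.
Qed.

Lemma upper_deviation_01 w : 0 <= upper_deviation w <= 1.
Proof.
have /andP[X0_ge0 _] := X_01 w m_gt0.
rewrite subr_ge0 (le_bigmax 0 (fun i : 'I_m => X i w) (Ordinal m_gt0)) /= lerBlDr.
apply: le_trans (_ : _ <= 1) _; last by rewrite lerDl.
by apply: bigmax_le => // i _; case/andP: (X_01 w (ltn_ord i)).
Qed.

Lemma ever_exceeds_eq1 lam w :
  0 < lam -> lam <= upper_deviation w -> ever_exceeds lam w = 1.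
Proof.
move=> lam_gt0; rewrite lerBrDr => /bigmax_ge_exists [|i Xi].
  by rewrite (lt_le_trans lam_gt0) // lerDl; case/andP: (X_01 w m_gt0).
rewrite /ever_exceeds (bigD1 i) //= /exceeds -lerBrDr in Xi *.
by rewrite Xi subrr mul0r subr0.
Qed.

Lemma upper_deviation_bounded : bounded_measurable upper_deviation.
Proof.
split; last by exists 1 => w; have /andP[v0 v1] := upper_deviation_01 w; rewrite ger0_norm.
apply: measurable_funB; last exact: (adapted_bounded m_gt0).1.
by apply: measurable_fun_bigmax => i; exact: (adapted_bounded (ltn_ord i)).1.
Qed.

Lemma Expect_upper_deviation_le_levels l0 K : 0 < l0 -> 1 < 2 ^+ K * l0 ->
  E upper_deviation <=
    l0 + \sum_(k < K) (2 ^+ k * l0) * E (ever_exceeds (2 ^+ k * l0)).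
Proof.
move=> l0_gt0 K_large.
have lvl_bounded (k : 'I_K) :
    bounded_measurable (fun w => 2 ^+ k * l0 * ever_exceeds (2 ^+ k * l0) w).
  exact/bounded_measurableZl/ever_exceeds_bounded.
have levels w : upper_deviation w <=
    l0 + \sum_(k < K) (2 ^+ k * l0) * ever_exceeds (2 ^+ k * l0) w.
  apply: (le_dyadic_levels (u := ever_exceeds^~ w)) => // [|l|l].
  - by have /andP[_ v1] := upper_deviation_01 w; apply: le_lt_trans K_large.
  - by have /andP[] := boolean_valued_01 w (ever_exceeds_boolean l).
  - exact: ever_exceeds_eq1.
apply: le_trans (le_Expect upper_deviation_bounded _ levels) _.
  exact: bounded_measurableD (bounded_measurable_cst l0) (bounded_measurable_sum lvl_bounded).
rewrite ExpectD ?Expect_cst ?Expect_sum //; last 2 first.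
- exact: bounded_measurable_cst.
- exact: bounded_measurable_sum.
by rewrite lerD2l; apply: ler_sum => k _; rewrite ExpectZl //; exact: ever_exceeds_bounded.
Qed.

Lemma Expect_upper_deviation_le_pos l0 K : 0 < l0 -> 1 < 2 ^+ K * l0 ->
  E upper_deviation <= l0 + K%:R * E (fun w => Order.max (increment w) 0).
Proof.
move=> l0_gt0 K_large; apply: le_trans (Expect_upper_deviation_le_levels l0_gt0 K_large) _.
suff level_le (k : 'I_K) :
    2 ^+ k * l0 * E (ever_exceeds (2 ^+ k * l0)) <= E (fun w => Order.max (increment w) 0).
  rewrite lerD2l (le_trans (ler_sum _ (fun k _ => level_le k))) //.
  by rewrite sumr_const card_ord mulr_natl.
apply: le_trans (maximal_inequality _) _; apply: le_Expect => [||w].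
- exact: bounded_measurableM increment_bounded (ever_exceeds_bounded _).
- exact: bounded_measurable_max0 increment_bounded.
case: (ever_exceeds_boolean (2 ^+ k * l0) w) => ->; last by rewrite mulr1 le_max lexx.
by rewrite mulr0 le_max lexx orbT.
Qed.

Lemma ever_exceeds_le_sq c : 0 < c ->
  c * E (ever_exceeds c) <= E (fun w => increment w ^+ 2) / c.
Proof.
move=> c_gt0; have U_bounded := ever_exceeds_bounded c.
have D2_bounded : bounded_measurable (fun w => increment w ^+ 2).
  exact: bounded_measurableM increment_bounded increment_bounded.
(* AM-GM: [D U <= (D^2 / c + c U) / 2], since [U] is 0 or 1. *)
have am_gm w : increment w * ever_exceeds c w <=
    2^-1 * (c^-1 * increment w ^+ 2) + 2^-1 * (c * ever_exceeds c w).
  have sq_ge0 : 0 <= (increment w - c) ^+ 2 / c by rewrite divr_ge0 ?sqr_ge0 ?ltW.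
  case: (ever_exceeds_boolean c w) => ->; rewrite ?mulr0 ?addr0 ?mulr1.
    by rewrite mulr_ge0 ?invr_ge0 // mulr_ge0 ?invr_ge0 ?sqr_ge0 // ltW.
  have sq_eq : (increment w - c) ^+ 2 / c = c^-1 * increment w ^+ 2 - 2 * increment w + c.
    by field; rewrite gt_eqF.
  by move: sq_ge0; rewrite sq_eq; lra.
have cD2_bounded := bounded_measurableZl c^-1 D2_bounded.
have cU_bounded := bounded_measurableZl c U_bounded.
have := le_Expect (P := P) (bounded_measurableM increment_bounded U_bounded)
  (bounded_measurableD (bounded_measurableZl _ cD2_bounded) (bounded_measurableZl _ cU_bounded))
  am_gm.
rewrite ExpectD; [|exact: bounded_measurableZl|exact: bounded_measurableZl].
rewrite !ExpectZl //; have := maximal_inequality c.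
by rewrite [_ / c]mulrC; lra.
Qed.

Lemma Expect_upper_deviation_le_sq l0 : 0 < l0 ->
  E upper_deviation <= l0 + 2 * E (fun w => increment w ^+ 2) / l0.
Proof.
move=> l0_gt0; have [K K_large] := exists_pow2_gt l0_gt0.
apply: le_trans (Expect_upper_deviation_le_levels l0_gt0 K_large) _.
set S := E _; have S_ge0 : 0 <= S by apply: Expect_ge0 => w; exact: sqr_ge0.
rewrite lerD2l; apply: le_trans (ler_sum _ (fun k _ => ever_exceeds_le_sq _)) _.
  by move=> k; rewrite mulr_gt0 ?exprn_gt0.
rewrite (eq_bigr (fun k : 'I_K => S / l0 * (2 ^+ k)^-1)) => [|k _]; last first.
  by rewrite invfM mulrA mulrAC.
rewrite -mulr_sumr [2 * S]mulrC [S * 2 / l0]mulrAC; apply: ler_wpM2l.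
  by rewrite divr_ge0 // ltW.
exact: sum_inv_pow2_le2.
Qed.

End upper_deviation.

Lemma martingale_on_indicatorsP d (T : measurableType d) (P : probability T RR) F m X :
  filtration F -> martingale P F m X -> martingale_on_indicators P F m X.
Proof.
move=> F_filtration [_ X_mart] i j h ij jm h_bool h_meas.
set A := h @^-1` [set 1].
have FA : F i A.
  exact: (measurable_wrtP _ (F_filtration.1 i)).1 h_meas _ (measurable_set1 1).
(* [h] is the indicator of the [F i]-event [A]. *)
have Expect_on_A k : Rintegral P setT (fun w => X k w * h w) = \int[P]_(w in A) X k w.
  rewrite [RHS]Rintegral_mkcond; apply: eq_Rintegral => w _; rewrite patchE.
  case: (h_bool w) => hw; last by rewrite mem_set ?hw ?mulr1.
  by rewrite memNset ?hw ?mulr0 // /A /preimage /= hw => /esym/eqP; rewrite oner_eq0.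
rewrite !Expect_on_A; move: jm; rewrite -(subnK ij); elim: (j - i)%N => [//|k IH] km.
rewrite addSn X_mart //; last exact: filtration_le F_filtration (leq_addl k i) _ FA.
exact/IH/ltn_trans/km.
Qed.

Lemma martingale_on_indicators_1B d (T : measurableType d) (R : realType)
    (P : probability T R) F m (X : nat -> T -> R) : filtration F ->
  (forall i, (i < m)%N -> bounded_measurable (X i)) ->
  martingale_on_indicators P F m X -> martingale_on_indicators P F m (fun i w => 1 - X i w).
Proof.
move=> [F_sigma [F_meas _]] X_bounded X_mart i j h ij jm h_bool h_meas.
have h_bounded : bounded_measurable h.
  exact/boolean_valued_bounded/h_bool/(measurable_wrt_measurable (F_sigma i) (@F_meas i)).
have Expect_1B k : (k < m)%N -> Rintegral P setT (fun w => (1 - X k w) * h w) =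
    Rintegral P setT h - Rintegral P setT (fun w => X k w * h w).
  move=> km; rewrite -ExpectB //; last exact: bounded_measurableM (X_bounded k km) h_bounded.
  by apply: eq_Rintegral => w _; rewrite mulrBl mul1r.
by rewrite !Expect_1B ?(X_mart i j) // (leq_ltn_trans ij).
Qed.

Section range.
Context d (T : measurableType d) (R : realType) (P : probability T R).
Local Notation E := (Rintegral P setT).
Variables (F : nat -> set (set T)) (m : nat) (X : nat -> T -> R).
Hypotheses (F_filtration : filtration F) (m_gt0 : (0 < m)%N).
Hypothesis X_adapted : forall i, (i < m)%N -> measurable_wrt (F i) (X i).
Hypothesis X_01 : forall i w, (i < m)%N -> 0 <= X i w <= 1.
Hypothesis X_martingale : martingale_on_indicators P F m X.

Definition range w := \big[Order.max/0]_(i < m) X i w - \big[Order.min/1]_(i < m) X i w.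

Let Y i w := 1 - X i w.

Let Y_adapted i : (i < m)%N -> measurable_wrt (F i) (Y i).
Proof. by move=> im; apply: measurable_funB; [exact: measurable_cst | exact: X_adapted]. Qed.

Let Y_01 i w : (i < m)%N -> 0 <= Y i w <= 1.
Proof. by move=> im; have := X_01 w im; rewrite /Y => /andP[? ?]; apply/andP; split; lra. Qed.

Let Y_martingale : martingale_on_indicators P F m Y.
Proof.
apply: martingale_on_indicators_1B => // i im.
exact: (adapted_bounded F_filtration X_adapted X_01 im).
Qed.

Lemma range_upper_deviation w : range w = upper_deviation m X w + upper_deviation m Y w.
Proof. by rewrite /range /upper_deviation /Y (bigmax_1B m (X^~ w)); ring. Qed.

Lemma Expect_range : E range = E (upper_deviation m X) + E (upper_deviation m Y).
Proof.
rewrite -ExpectD.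
- by apply: eq_Rintegral => w _; exact: range_upper_deviation.
- exact: (upper_deviation_bounded F_filtration m_gt0 X_adapted X_01).
- exact: (upper_deviation_bounded F_filtration m_gt0 Y_adapted Y_01).
Qed.

Lemma increment_1B w : increment m Y w = - increment m X w.
Proof. by rewrite /increment /Y; ring. Qed.

Lemma Expect_range_le_abs l0 K : 0 < l0 -> 1 < 2 ^+ K * l0 ->
  E range <= 2 * l0 + K%:R * E (fun w => `|increment m X w|).
Proof.
move=> l0_gt0 K_large; rewrite Expect_range.
have := Expect_upper_deviation_le_pos F_filtration m_gt0 X_adapted X_01 X_martingale l0_gt0 K_large.
have := Expect_upper_deviation_le_pos F_filtration m_gt0 Y_adapted Y_01 Y_martingale l0_gt0 K_large.
have -> : E (fun w => `|increment m X w|) =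
    E (fun w => Order.max (increment m X w) 0) + E (fun w => Order.max (increment m Y w) 0).
  rewrite -ExpectD.
  - apply: eq_Rintegral => w _; rewrite increment_1B; case: (leP (increment m X w) 0) => D0.
      by rewrite ler0_norm // max_l ?oppr_ge0 // add0r.
    by rewrite gtr0_norm // max_r ?addr0 // oppr_le0 ltW.
  - exact/bounded_measurable_max0/(increment_bounded F_filtration m_gt0 X_adapted X_01).
  - exact/bounded_measurable_max0/(increment_bounded F_filtration m_gt0 Y_adapted Y_01).
by lra.
Qed.

Lemma Expect_range_le_sq l0 : 0 < l0 ->
  E range <= 2 * l0 + 4 * E (fun w => increment m X w ^+ 2) / l0.
Proof.
move=> l0_gt0; rewrite Expect_range.
have := Expect_upper_deviation_le_sq F_filtration m_gt0 X_adapted X_01 X_martingale l0_gt0.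
have := Expect_upper_deviation_le_sq F_filtration m_gt0 Y_adapted Y_01 Y_martingale l0_gt0.
have -> : E (fun w => increment m Y w ^+ 2) = E (fun w => increment m X w ^+ 2).
  by apply: eq_Rintegral => w _; rewrite increment_1B sqrrN.
by lra.
Qed.

End range.

Section constants.
Context (R : realType).

Lemma ln2_le1 : ln 2 <= 1 :> R.
Proof.
rewrite -[leRHS](expRK 1) ler_ln ?posrE ?expR_gt0 //.
by apply: le_trans (expR_ge1Dx 1); rewrite addrC.
Qed.

Lemma two_sqrt_8_le x y : 0 <= x -> 0 <= y ->
  2 * Num.sqrt (2 * x * (4 * y)) <= 6 / ln 2 * Num.sqrt x * Num.sqrt y :> R.
Proof.
move=> x_ge0 y_ge0; have ln2_gt0 : 0 < ln 2 :> R by rewrite ln_gt0 // ltr1n.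
have -> : 2 * x * (4 * y) = 8 * (x * y) by ring.
rewrite !sqrtrM ?mulr_ge0 // !mulrA ler_wpM2r ?sqrtr_ge0 // ler_wpM2r ?sqrtr_ge0 //.
have sqrt8_le3 : Num.sqrt 8 <= 3 :> R.
  by rewrite -ler_sqr ?nnegrE ?sqrtr_ge0 // sqr_sqrtr // expr2; lra.
have six_le : 6 <= 6 / ln 2 :> R.
  by rewrite ler_pdivlMr //; have := ln2_le1; lra.
lra.
Qed.

Lemma dyadic_exponent N : (2 <= N)%N ->
  exists K, 1 < 2 ^+ K * (2 * N%:R)^-1 :> R /\ 2 * K%:R <= 6 / ln 2 * ln N%:R :> R.
Proof.
move=> N_ge2; set t := trunc_log 2 N; exists t.+2.
have ln2_gt0 : 0 < ln 2 :> R by rewrite ln_gt0 // ltr1n.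
have t_gt0 : (0 < t)%N by rewrite trunc_log_gt0.
split.
  rewrite ltr_pdivlMr ?mulr_gt0 ?ltr0n ?(leq_trans _ N_ge2) // mul1r.
  by rewrite -natrX -natrM ltr_nat expnS ltn_pmul2l // trunc_log_ltn.
have t_ln2 : t%:R * ln 2 <= ln N%:R :> R.
  rewrite mulr_natl -lnXn // ler_ln ?posrE ?exprn_gt0 ?ltr0n ?(leq_trans _ N_ge2) //.
  by rewrite -natrX ler_nat trunc_logP // (leq_trans _ N_ge2).
apply: le_trans (_ : 6 / ln 2 * (t%:R * ln 2) <= _); last first.
  by apply: ler_wpM2l t_ln2; rewrite divr_ge0 // ltW.
have t_ge1 : 1 <= t%:R :> R by rewrite ler1n.
have -> : 6 / ln 2 * (t%:R * ln 2) = 6 * t%:R :> R by field; rewrite gt_eqF.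
by rewrite -addn2 natrD; lra.
Qed.

Lemma le_two_sqrt (a b L : R) : 0 < a -> 0 <= b ->
  (forall l, 0 < l -> L <= a * l + b / l) -> L <= 2 * Num.sqrt (a * b).
Proof.
move=> a_gt0 b_ge0 L_le; have [b0|b_neq0] := eqVneq b 0.
  rewrite b0 mulr0 sqrtr0 mulr0 leNgt; apply/negP => L_gt0.
  have l_gt0 : 0 < L / (2 * a) by rewrite divr_gt0 ?mulr_gt0.
  have := L_le _ l_gt0; rewrite b0 mul0r addr0.
  have -> : a * (L / (2 * a)) = L / 2 by field; rewrite gt_eqF.
  lra.
have sa_gt0 : 0 < Num.sqrt a by rewrite sqrtr_gt0.
have sb_gt0 : 0 < Num.sqrt b by rewrite sqrtr_gt0 lt0r b_neq0.
apply: le_trans (L_le _ (divr_gt0 sb_gt0 sa_gt0)) _.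
rewrite sqrtrM ?(ltW a_gt0) // -{1}(sqr_sqrtr (ltW a_gt0)) -{2}(sqr_sqrtr b_ge0).
set sa := Num.sqrt a; set sb := Num.sqrt b.
suff -> : sa ^+ 2 * (sb / sa) + sb ^+ 2 / (sb / sa) = 2 * (sa * sb) by [].
by field; rewrite !gt_eqF.
Qed.

End constants.

Lemma in_simplex_01 q (p : 'I_q -> RR) x : in_simplex p -> 0 <= p x <= 1.
Proof.
move=> [p_ge0 p_sum]; rewrite p_ge0 -p_sum (bigD1 x) //= lerDl.
by apply: sumr_ge0 => y _; exact: p_ge0.
Qed.

Section simplex_martingale.
Context d (T : measurableType d) (P : probability T RR).
Variables (m q : nat) (mu : nat -> T -> 'I_q -> RR) (F : nat -> set (set T)).
Hypotheses (m_gt0 : (0 < m)%N) (F_filtration : filtration F).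
Hypothesis mu_simplex : forall i w, (i < m)%N -> in_simplex (mu i w).
Hypothesis mu_martingale : forall x : 'I_q, martingale P F m (fun i w => mu i w x).

Let coord (x : 'I_q) i w := mu i w x.

Let coord_adapted x i : (i < m)%N -> measurable_wrt (F i) (coord x i).
Proof.
move=> im; apply/(measurable_wrtP _ (F_filtration.1 i)) => B mB.
exact: ((mu_martingale x).1 i im).1.
Qed.

Let coord_01 x i w : (i < m)%N -> 0 <= coord x i w <= 1.
Proof. by move=> im; exact/in_simplex_01/mu_simplex. Qed.

Let coord_martingale x : martingale_on_indicators P F m (coord x).
Proof. exact: (martingale_on_indicatorsP F_filtration (mu_martingale x)). Qed.

Let coord_increment_bounded x : bounded_measurable (increment m (coord x)).
Proof. exact: (increment_bounded F_filtration m_gt0 (coord_adapted x) (coord_01 x)). Qed.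

Lemma sum_Expect_range_le_TV l0 K : 0 < l0 -> 1 < 2 ^+ K * l0 ->
  \sum_(x < q) Expect P (range m (coord x)) <=
    2 * q%:R * l0 + 2 * K%:R * Expect P (fun w => TV (mu 0%N w) (mu m.-1 w)).
Proof.
move=> l0_gt0 K_large.
apply: le_trans (ler_sum _ (fun x _ => Expect_range_le_abs F_filtration m_gt0
  (coord_adapted x) (coord_01 x) (coord_martingale x) l0_gt0 K_large)) _.
rewrite big_split /= sumr_const card_ord -[2 * l0 *+ q]mulr_natl mulrA [q%:R * 2]mulrC lerD2l.
have TV_sum : (fun w => 2 * TV (mu 0%N w) (mu m.-1 w)) =
    (fun w => \sum_(x < q) `|increment m (coord x) w|).
  apply/funext => w; rewrite /TV mulrA mulfV ?pnatr_eq0 // mul1r.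
  by apply: eq_bigr => x _; rewrite distrC.
have abs_bounded x : bounded_measurable (fun w => `|increment m (coord x) w|).
  exact/bounded_measurable_norm/coord_increment_bounded.
rewrite -mulr_sumr [2 * K%:R]mulrC -mulrA ler_wpM2l // -Expect_sum // -ExpectZl.
  by rewrite TV_sum.
apply/bounded_measurableZl/bounded_measurable_sum => x.
by under eq_fun do rewrite distrC; exact: abs_bounded.
Qed.

Lemma sum_Expect_range_le_sq l0 : 0 < l0 ->
  \sum_(x < q) Expect P (range m (coord x)) <=
    2 * q%:R * l0 +
    4 * Expect P (fun w => \sum_(x < q) (mu m.-1 w x - mu 0%N w x) ^+ 2) / l0.
Proof.
move=> l0_gt0.
apply: le_trans (ler_sum _ (fun x _ => Expect_range_le_sq F_filtration m_gt0
  (coord_adapted x) (coord_01 x) (coord_martingale x) l0_gt0)) _.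
rewrite big_split /= sumr_const card_ord -[2 * l0 *+ q]mulr_natl mulrA [q%:R * 2]mulrC.
rewrite lerD2l -mulr_suml -mulr_sumr /Expect -Expect_sum // => x.
exact: bounded_measurableM (coord_increment_bounded x) (coord_increment_bounded x).
Qed.

End simplex_martingale.

Theorem lemma2p11 :
  exists C : RR, 0 < C /\
  forall (d : measure_display) (T : measurableType d) (P : probability T RR)
    (m q : nat) (mu : nat -> T -> 'I_q -> RR) (F : nat -> set (set T)),
    (0 < m)%N -> (0 < q)%N ->
    (forall i w, (i < m)%N -> in_simplex (mu i w)) ->
    filtration F ->
    (forall x : 'I_q, martingale P F m (fun i w => mu i w x)) ->
    forall n : nat, (2 <= n * q)%N ->
      \sum_(x < q) Expect P (fun w =>
          \big[Order.max/0]_(i < m) mu i w x - \big[Order.min/1]_(i < m) mu i w x)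
      <= Order.min
           (C * ln ((n * q)%:R) * Expect P (fun w => TV (mu 0%N w) (mu m.-1 w)) + n%:R^-1)
           (C * Num.sqrt (q%:R) *
              Num.sqrt (Expect P (fun w => \sum_(x < q) (mu m.-1 w x - mu 0%N w x) ^+ 2))).
Proof.
have ln2_gt0 : 0 < ln (2 : RR) by rewrite ln_gt0 // ltr1n.
exists (6 / ln 2); split; first by rewrite divr_gt0.
move=> d T P m q mu F m_gt0 q_gt0 mu_simplex F_filtration mu_martingale n nq_ge2.
have n_gt0 : (0 < n)%N by move: nq_ge2; case: n.
rewrite le_min; apply/andP; split.
- have [K [K_large K_le]] := dyadic_exponent RR nq_ge2.
  pose l0 : RR := (2 * (n * q)%:R)^-1.
  have l0_gt0 : 0 < l0 by rewrite invr_gt0 mulr_gt0 // ltr0n muln_gt0 n_gt0.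
  apply: le_trans (sum_Expect_range_le_TV m_gt0 F_filtration mu_simplex mu_martingale
    l0_gt0 K_large) _.
  have -> : 2 * q%:R * l0 = n%:R^-1.
    by rewrite /l0 natrM; field; rewrite !pnatr_eq0 -!lt0n n_gt0 q_gt0.
  rewrite [leRHS]addrC lerD2l; apply: ler_wpM2r K_le.
  by apply: Expect_ge0 => w; rewrite /TV mulr_ge0 ?sumr_ge0.
- set Q := Expect P _; have q_ge0 : 0 <= q%:R :> RR by [].
  have Q_ge0 : 0 <= Q by apply: Expect_ge0 => w; apply: sumr_ge0 => x _; exact: sqr_ge0.
  apply: le_trans (two_sqrt_8_le q_ge0 Q_ge0).
  apply: le_two_sqrt
    (sum_Expect_range_le_sq m_gt0 F_filtration mu_simplex mu_martingale).
  - by rewrite mulr_gt0 // ltr0n.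
  - by rewrite mulr_ge0.
Qed.
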